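(* Assume $q \in U_0$ and, for each $i\in\{1,2\}$, $q\bmod n_i$ is a quadratic residue modulo $n_i$. Let $\omega_{(0,0,0)}$ denote the minimum odd-like weight of the cyclic code over $\mathrm{GF}(q)$ of length $n$ with generator polynomial $u_0(x)d_0^{(n_1)}(x)d_0^{(n_2)}(x)$. For $j\in\{1,2\}$ let $\omega_1^{(n/n_j)}$ denote the minimum odd-like weight of the cyclic code of length $n$ over $\mathrm{GF}(q)$ with generator polynomial $(x^n-1)/\big((x-1)d_1^{(n_j)}(x)\big)$. Then $$\omega_{(0,0,0)} \ge \sqrt{\max\big(\omega_1^{(n/n_1)},\ \omega_1^{(n/n_2)}\big)}.$$
   Context: Let $n_1,n_2$ be distinct odd primes, $n=n_1n_2$, and let $q$ be a prime power with $\gcd(q,n)=1$. Let $d=\gcd(n_1-1,n_2-1)$ and $e=(n_1-1)(n_2-1)/d$. Let $g_1,g_2$ be primitive roots modulo $n_1,n_2$ respectively, let $g$ be the integer modulo $n$ with $g\equiv g_1 \pmod{n_1}$, $g\equiv g_2\pmod{n_2}$, and let $\nu$ be the integer modulo $n$ with $\nu\equiv g\pmod{n_1}$, $\nu\equiv 1\pmod{n_2}$. It is known that every element of $\mathbb{Z}_n^*$ can be written uniquely as $g^s\nu^i$ with $0\le s\le e-1$, $0\le i\le d-1$. Define $U_0=\{g^s\nu^i: 0\le s\le e-1,\ 0\le i \le d-1,\ i \text{ even}\}$ and $U_1=\{g^s\nu^i: i \text{ odd}\}$ (same ranges). For $j\in\{1,2\}$ let $D_0^{(n_j)}$, $D_1^{(n_j)}$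 be the sets of quadratic residues and nonresidues modulo $n_j$. Let $N=\mathrm{ord}_n(q)$ and $\theta$ a primitive $n$-th root of unity in $\mathrm{GF}(q^N)$. Define $d_i^{(n_1)}(x)=\prod_{j\in D_i^{(n_1)}}(x-\theta^{n_2 j})$, $d_i^{(n_2)}(x)=\prod_{j\in D_i^{(n_2)}}(x-\theta^{n_1 j})$, and $u_j(x)=\prod_{i\in U_j}(x-\theta^i)$; under the hypotheses these lie in $\mathrm{GF}(q)[x]$. Cyclic codes of length $n$ are identified with ideals of $\mathrm{GF}(q)[x]/(x^n-1)$. A codeword $(c_0,\dots,c_{n-1})$ is odd-like if $\sum_i c_i\neq 0$; the minimum odd-like weight of a code is the minimum Hamming weight of its odd-like codewords. *)

From HB Require Import structures.
From mathcomp Require Import all_boot all_order all_algebra all_field.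
Set Implicit Arguments. Unset Strict Implicit. Unset Printing Implicit Defensive.
Import GRing.Theory.

Definition is_prim_root_mod (p g : nat) : bool :=
  coprime g p && [forall k : 'I_(p.-1), (0 < k) ==> (g ^ k %% p != 1)].

Definition qr_mod (p a : nat) : bool :=
  (a %% p != 0) && [exists x : 'I_p, (x ^ 2) %% p == a %% p].

Definition D0 (p : nat) : seq nat := [seq j <- iota 1 p.-1 | qr_mod p j].
Definition D1 (p : nat) : seq nat := [seq j <- iota 1 p.-1 | ~~ qr_mod p j].

Definition Useq (n e d g nu : nat) (b : bool) : seq nat :=
  undup [seq (g ^ s * nu ^ i) %% n
        | s <- iota 0 e, i <- [seq i <- iota 0 d | odd i == b]].

Local Open Scope ring_scope.

Definition dpoly (L : fieldType) (theta : L) (m : nat) (D : seq nat) : {poly L} :=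
  \prod_(j <- D) ('X - (theta ^+ (m * j))%:P).

Definition upoly (L : fieldType) (theta : L) (U : seq nat) : {poly L} :=
  \prod_(i <- U) ('X - (theta ^+ i)%:P).

(* Words of length n over F: c = (c_0,...,c_{n-1}) <-> c_0 + c_1 x + ... *)
Definition wt (F : fieldType) (n : nat) (c : n.-tuple F) : nat :=
  count (fun a => a != 0) c.

Definition oddlike (F : fieldType) (n : nat) (c : n.-tuple F) : bool :=
  \sum_(a <- c) a != 0.

(* c belongs to the cyclic code of length n over F with generator gen
   (gen given in the extension L, where it is defined): gen | c(x). *)
Definition in_code (F : fieldType) (L : fieldExtType F) (n : nat)
  (gen : {poly L}) (c : n.-tuple F) : bool :=
  gen %| map_poly (in_alg L) (Poly c).

(* minimum Hamming weight of the odd-like codewords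
   (default n, never smaller than an actual odd-like weight) *)
Definition min_oddlike_weight (F : finFieldType) (L : fieldExtType F) (n : nat)
  (gen : {poly L}) : nat :=
  \big[minn/n]_(c : n.-tuple F | in_code gen c && oddlike c) wt c.

From HB Require Import structures.
From mathcomp Require Import all_boot all_order all_algebra all_field.
From mathcomp Require Import ring.
From mathcomp Require cyclic.
Import Order.TTheory GRing.Theory.
Set Implicit Arguments. Unset Strict Implicit. Unset Printing Implicit Defensive.

(* Let Z be the set of exponents x for which theta ^ x is a root of the
   generator u_0 d_0^(n1) d_0^(n2) of C_(0,0,0), and let R_j = 0 :: (n/n_j) D_1^(n_j)
   be the exponents of the nonzeros of C_1^(n/n_j).  For an odd-like codeword c
   of C_(0,0,0) and a multiplier mu, the word c(x) c(x^mu) mod (x^n - 1) has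
   weight at most wt(c)^2, is odd-like (its coefficient sum is the square of
   that of c), and takes the value c(theta^k) c(theta^(k mu)) at theta^k.  So
   it lies in C_1^(n/n_j) as soon as every k < n outside R_j has k or k mu in Z.
   The multipliers mu1 = g / nu and mu2 = 1 / nu do this: on a unit g^s nu^i
   they flip the parity of i, and on a multiple of one prime they turn a
   nonresidue cofactor into a residue or fix the excluded set. *)

Lemma modM_congr (n a a' b b' : nat) :
  a = a' %[mod n] -> b = b' %[mod n] -> a * b = a' * b' %[mod n].
Proof. by move=> Ha Hb; rewrite -modnMm Ha Hb modnMm. Qed.

Lemma modX_congr (n a a' k : nat) : a = a' %[mod n] -> a ^ k = a' ^ k %[mod n].
Proof. by move=> Ha; rewrite -modnXm Ha modnXm. Qed.

Lemma exp_mod_period (p g M x : nat) : g ^ M = 1 %[mod p] ->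
  g ^ x = g ^ (x %% M) %[mod p].
Proof.
move=> gM; rewrite {1}(divn_eq x M) expnD [x %/ M * M]mulnC expnM.
by rewrite -[X in _ = X %[mod p]]mul1n; apply: modM_congr; rewrite // (modX_congr _ gM) exp1n.
Qed.

Lemma fermat (p a : nat) : prime p -> coprime a p -> a ^ p.-1 = 1 %[mod p].
Proof. by move=> pp co; rewrite -(totient_prime pp) cyclic.Euler_exp_totient. Qed.

Lemma crt_congr (n1 n2 x y : nat) : coprime n1 n2 ->
  x = y %[mod n1] -> x = y %[mod n2] -> x = y %[mod n1 * n2].
Proof. by move=> co H1 H2; apply/eqP; rewrite chinese_remainder // H1 H2 !eqxx. Qed.

Lemma coprime_mod_neq0 (p a : nat) : 1 < p -> coprime a p -> a %% p != 0.
Proof.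
move=> p1 co; apply/eqP => a0; move: co.
by rewrite -coprime_modl a0 /coprime gcd0n => /eqP p_1; rewrite p_1 in p1.
Qed.

Lemma prim_root_congr (p h h' : nat) :
  is_prim_root_mod p h -> h' = h %[mod p] -> is_prim_root_mod p h'.
Proof.
case/andP=> co /forallP pw E; apply/andP; split; first by rewrite -coprime_modl E coprime_modl.
by apply/forallP => k; rewrite (modX_congr k E).
Qed.

Section PrimitiveRoot.
Variables (p h : nat).
Hypotheses (pr_p : prime p) (prim_h : is_prim_root_mod p h).

Lemma prim_root_coprime : coprime h p.
Proof. by case/andP: prim_h. Qed.

Lemma prim_root_pow_inj (i j : nat) : i < p.-1 -> j < p.-1 ->
  h ^ i = h ^ j %[mod p] -> i = j.
Proof.
wlog le_ij : i j / i <= j => [hyp ip jp E|ip jp E].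
  by case: (leqP i j) => [/hyp->//|/ltnW/hyp-> //]; apply/esym.
apply/eqP; rewrite eqn_leq le_ij /= leqNgt; apply/negP => lt_ij.
have t_lt : j - i < p.-1 by apply: leq_ltn_trans (leq_subr i j) jp.
case/andP: prim_h => _ /forallP /(_ (Ordinal t_lt)); rewrite /= subn_gt0 lt_ij /=.
have hF := fermat pr_p prim_root_coprime.
apply/negP; rewrite negbK; apply/eqP.
have e1 : j - i + p.-1 = j + (p.-1 - i) by rewrite addnBA ?(ltnW ip) // addnBAC.
have step : h ^ (j - i) * h ^ p.-1 = h ^ i * h ^ (p.-1 - i) %[mod p].
  by rewrite -expnD e1 expnD; apply: modM_congr.
move: step; rewrite -[h ^ i * _]expnD subnKC ?(ltnW ip) // hF (modn_small (prime_gt1 pr_p)).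
by rewrite -modnMmr hF modnMmr muln1.
Qed.

Lemma prim_root_log (a : nat) : a %% p != 0 -> exists t, h ^ t = a %[mod p].
Proof.
move=> a0; have p0 : 0 < p by rewrite prime_gt0.
pose pw := fun k : 'I_(p.-1) => (Ordinal (ltn_pmod (h ^ k) p0) : 'I_p).
have pw_inj : injective pw.
  by move=> i j /(congr1 val) /= E; apply/val_inj/(prim_root_pow_inj (ltn_ord i) (ltn_ord j)).
pose zero : 'I_p := Ordinal p0.
have sub : [set pw k | k in 'I_(p.-1)] \subset [set~ zero].
  apply/subsetP => y /imsetP[k _ ->]; rewrite !inE; apply/eqP => /(congr1 val) /= /eqP.
  by apply/negP/coprime_mod_neq0; rewrite ?prime_gt1 ?coprimeXl ?prim_root_coprime.
have card_eq : #|[set pw k | k in 'I_(p.-1)]| = #|[set~ zero]|.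
  by rewrite cardsC1 (card_imset _ pw_inj) !card_ord.
have a_in : (Ordinal (ltn_pmod a p0) : 'I_p) \in [set~ zero].
  by rewrite !inE; apply/eqP => /(congr1 val) /= /eqP; apply/negP.
move: a_in; rewrite -(subset_cardP card_eq sub) => /imsetP[k _ /(congr1 val) /= E].
by exists k.
Qed.

Lemma qr_even_pow (a t : nat) : a = h ^ (2 * t) %[mod p] -> qr_mod p a.
Proof.
move=> E; apply/andP; split.
  by rewrite E; apply: coprime_mod_neq0; rewrite ?prime_gt1 ?coprimeXl ?prim_root_coprime.
apply/existsP; exists (Ordinal (ltn_pmod (h ^ t) (prime_gt0 pr_p))) => /=.
by rewrite modnXm -expnM mulnC E.
Qed.

Lemma nonresidue_odd_log (a : nat) : a %% p != 0 -> ~~ qr_mod p a ->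
  exists2 t, odd t & a = h ^ t %[mod p].
Proof.
move=> a0 nqr; have [t Et] := prim_root_log a0.
case ot: (odd t); first by exists t.
case/negP: nqr; apply: (@qr_even_pow _ t./2).
by rewrite -Et -{1}(odd_double_half t) ot add0n -mul2n.
Qed.

Lemma qr_flip (a mu t : nat) : a %% p != 0 -> odd t -> mu = h ^ t %[mod p] ->
  qr_mod p a \/ qr_mod p (a * mu).
Proof.
move=> a0 ot Emu; case qa: (qr_mod p a); [by left | right].
have [r or Ea] := nonresidue_odd_log a0 (negbT qa).
apply: (@qr_even_pow _ (r + t)./2).
rewrite (modM_congr Ea Emu) -expnD; congr (h ^ _ %% p).
by rewrite -[LHS]odd_double_half oddD or ot add0n mul2n.
Qed.

End PrimitiveRoot.

Lemma scaled_mem_D1 (p c m : nat) : 0 < c * m < p * c -> ~~ qr_mod p m ->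
  c * m \in map (muln c) (D1 p).
Proof.
rewrite muln_gt0 => /andP[/andP[c0 m0] cm] nqr.
rewrite (mulnC c) ltn_mul2r c0 /= in cm.
apply: map_f; rewrite mem_filter nqr mem_iota m0 /= add1n prednK //.
exact: leq_ltn_trans (leq0n m) cm.
Qed.

Section UnitsModN.
Variables (n1 n2 g nu : nat).
Hypotheses (pr1 : prime n1) (pr2 : prime n2) (n1_neq_n2 : n1 != n2).
Hypotheses (prim1 : is_prim_root_mod n1 g) (prim2 : is_prim_root_mod n2 g).
Hypotheses (nu_mod1 : nu = g %[mod n1]) (nu_mod2 : nu = 1 %[mod n2]).

Local Notation n := (n1 * n2).
Local Notation M1 := n1.-1.
Local Notation M2 := n2.-1.
Local Notation d := (gcdn n1.-1 n2.-1).
Local Notation e := (n1.-1 * n2.-1 %/ gcdn n1.-1 n2.-1).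

Lemma coprime_n12 : coprime n1 n2.
Proof. by rewrite prime_coprime // dvdn_prime2. Qed.

Lemma M1_gt0 : 0 < M1.
Proof. by rewrite -ltnS prednK ?prime_gt1 ?prime_gt0. Qed.

Lemma M2_gt0 : 0 < M2.
Proof. by rewrite -ltnS prednK ?prime_gt1 ?prime_gt0. Qed.

Lemma e_gt0 : 0 < e.
Proof.
rewrite -muln_divA ?dvdn_gcdr // muln_gt0 M1_gt0 divn_gt0 ?gcdn_gt0 ?M1_gt0 //.
by rewrite dvdn_leq ?M2_gt0 ?dvdn_gcdr.
Qed.

Lemma g_exp_e : g ^ e = 1 %[mod n].
Proof.
apply: crt_congr; first exact: coprime_n12.
  rewrite -muln_divA ?dvdn_gcdr // expnM.
  by rewrite (modX_congr _ (fermat pr1 (prim_root_coprime prim1))) exp1n.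
rewrite mulnC -muln_divA ?dvdn_gcdl // expnM.
by rewrite (modX_congr _ (fermat pr2 (prim_root_coprime prim2))) exp1n.
Qed.

Lemma nu_prim1 : is_prim_root_mod n1 nu.
Proof. exact: prim_root_congr prim1 nu_mod1. Qed.

Lemma nu_exp_M1 : nu ^ M1 = 1 %[mod n].
Proof.
apply: crt_congr; first exact: coprime_n12.
  exact: fermat pr1 (prim_root_coprime nu_prim1).
by rewrite (modX_congr _ nu_mod2) exp1n.
Qed.

(* nu ^ d lies in the cyclic group generated by g: if n1 - 1 divides
   d + b (n2 - 1) (Bezout), then x = (n1 - 2) b (n2 - 1) is congruent to d
   modulo n1 - 1 and to 0 modulo n2 - 1. *)
Lemma nu_exp_d : exists x, nu ^ d = g ^ x %[mod n].
Proof.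
have [b _ /dvdnP[k Hk]] := Bezoutl M2 M1_gt0.
have gF1 := fermat pr1 (prim_root_coprime prim1).
have gF2 := fermat pr2 (prim_root_coprime prim2).
have x_mod : M1.-1 * b * M2 = d %[mod M1].
  have expand (m B N D : nat) : m * B * N + (D + B * N) = B * N * m.+1 + D by ring.
  have H : M1.-1 * b * M2 + k * M1 = b * M2 * M1 + d.
    by rewrite -Hk expand prednK // M1_gt0.
  by rewrite -(modnMDl k (M1.-1 * b * M2)) [k * M1 + _]addnC H modnMDl.
exists (M1.-1 * b * M2); apply: crt_congr; first exact: coprime_n12.
  by rewrite (modX_congr d nu_mod1) (exp_mod_period _ gF1) [in RHS](exp_mod_period _ gF1) x_mod.
by rewrite (modX_congr _ nu_mod2) exp1n mulnC expnM (modX_congr _ gF2) exp1n.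
Qed.

Lemma unit_nu_g (a : nat) : coprime a n -> exists m t, a = nu ^ m * g ^ t %[mod n].
Proof.
rewrite coprimeMr => /andP[co1 co2].
have [t Et] := prim_root_log pr2 prim2 (coprime_mod_neq0 (prime_gt1 pr2) co2).
have g_et : g ^ (e * t) = 1 %[mod n] by rewrite expnM (modX_congr _ g_exp_e) exp1n.
have e_t : (e.-1 * t) + t = e * t by rewrite addnC -mulSn prednK // e_gt0.
pose b := a * g ^ (e.-1 * t).
have b_mod2 : b = 1 %[mod n2].
  rewrite /b -(modM_congr Et (erefl (g ^ _ %% n2))) -expnD addnC e_t.
  by rewrite -(modn_dvdm _ (dvdn_mull n1 (dvdnn n2))) g_et modn_dvdm ?dvdn_mull.
have b_nz1 : b %% n1 != 0.
  by rewrite coprime_mod_neq0 ?prime_gt1 // coprimeMl co1 coprimeXl ?(prim_root_coprime prim1).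
have [m Em] := prim_root_log pr1 nu_prim1 b_nz1.
have nu_b : nu ^ m = b %[mod n].
  by apply: crt_congr; rewrite ?coprime_n12 // (modX_congr _ nu_mod2) exp1n b_mod2.
exists m, t; rewrite (modM_congr nu_b (erefl (g ^ t %% n))) /b -mulnA -expnD e_t.
by rewrite -[a in LHS]muln1 (modM_congr (erefl (a %% n)) g_et).
Qed.

Lemma unit_normal_form (a : nat) : coprime a n ->
  exists s i, [/\ s < e, i < d & a = g ^ s * nu ^ i %[mod n]].
Proof.
move=> co; have [m [t Ea]] := unit_nu_g co; have [x Ex] := nu_exp_d.
exists ((x * (m %/ d) + t) %% e), (m %% d).
split; rewrite ?ltn_mod ?e_gt0 ?gcdn_gt0 ?M1_gt0 //.
rewrite Ea {1}(divn_eq m d) expnD mulnC [m %/ d * d]mulnC expnM mulnA.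
apply: modM_congr => //; rewrite (modM_congr (erefl (g ^ t %% n)) (modX_congr _ Ex)).
by rewrite -expnM -expnD addnC (exp_mod_period _ g_exp_e).
Qed.

(* The defining set U_0 of the paper, and the exponents x for which
   theta ^ x is a root of the generator u_0 d_0^(n1) d_0^(n2) of C_(0,0,0). *)
Definition U0 : seq nat := Useq n e d g nu false.

Definition zero_exp (x : nat) : Prop :=
  [\/ x %% n \in U0, exists2 m, x = n2 * m & qr_mod n1 m
    | exists2 m, x = n1 * m & qr_mod n2 m].

Lemma zero_exp_normal (x s i : nat) : s < e -> i < d -> ~~ odd i ->
  x = g ^ s * nu ^ i %[mod n] -> zero_exp x.
Proof.
move=> se id ev_i Ex; apply: Or31; rewrite Ex /U0 /Useq mem_undup.
apply: (allpairs_f (fun s i => g ^ s * nu ^ i %% n)); first by rewrite mem_iota.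
by rewrite mem_filter mem_iota /= id (negbTE ev_i).
Qed.

(* Multiplying by g ^ a * nu ^ (n1 - 2), i.e. by g ^ a / nu, flips the parity
   of the nu-exponent of a unit: one of k, k * mu lies in U_0. *)
Lemma unit_cover (a k : nat) : coprime k n ->
  zero_exp k \/ zero_exp (k * (g ^ a * nu ^ M1.-1)).
Proof.
move=> co; have [s [i [se id Ek]]] := unit_normal_form co.
case odd_i: (odd i); last by left; apply: (zero_exp_normal se id); rewrite ?odd_i.
have i0 : 0 < i by case: i odd_i {Ek id}.
right; apply: (@zero_exp_normal _ ((s + a) %% e) i.-1).
- by rewrite ltn_mod e_gt0.
- exact: leq_ltn_trans (leq_pred i) id.
- by rewrite -(prednK i0) /= in odd_i; rewrite odd_i.
have nu_exps : nu ^ i * nu ^ M1.-1 = nu ^ i.-1 * nu ^ M1.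
  by rewrite -!expnD -{1}(prednK i0) -{2}(prednK M1_gt0) addSnnS.
rewrite (modM_congr Ek (erefl (_ %% n))) mulnACA -expnD.
rewrite nu_exps mulnA (modM_congr (erefl (_ %% n)) nu_exp_M1) muln1.
by apply: modM_congr => //; apply: exp_mod_period g_exp_e.
Qed.

Lemma nonunit_split (k : nat) : 0 < k < n -> ~~ coprime k n ->
  (exists2 m, k = n1 * m & m %% n2 != 0) \/ (exists2 m, k = n2 * m & m %% n1 != 0).
Proof.
case/andP=> k0 kn; rewrite coprimeMr !(coprime_sym k) !prime_coprime // negb_and !negbK.
have not_both : n1 %| k -> n2 %| k -> False.
  move=> d1 d2; have : n %| k by rewrite Gauss_dvd ?coprime_n12 ?d1.
  by move/dvdn_leq => /(_ k0); rewrite leqNgt kn.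
case/orP=> [d1|d2]; [left | right].
  have [m Em] := dvdnP d1; exists m; first by rewrite Em mulnC.
  by apply/negP => dm; apply: (not_both d1); rewrite Em (dvdn_mulr _ dm).
have [m Em] := dvdnP d2; exists m; first by rewrite Em mulnC.
by apply/negP => dm; apply: (not_both _ d2); rewrite Em (dvdn_mulr _ dm).
Qed.

(* For mu1 = g / nu (= 1 mod n1, = g mod n2), one of k, k * mu1 is a zero
   exponent unless k = 0 or k lies in n2 D_1^(n1). *)
Lemma cover_mu1 (k : nat) : 0 < k < n -> k \notin map (muln n2) (D1 n1) ->
  zero_exp k \/ zero_exp (k * (g * nu ^ M1.-1)).
Proof.
move=> kb kD; case: (boolP (coprime k n)) => [co | nco].
  by have := unit_cover 1 co; rewrite expn1.
case: (nonunit_split kb nco) => -[m Ek m0].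
  have mu_mod2 : g * nu ^ M1.-1 = g ^ 1 %[mod n2].
    by rewrite expn1 -[g in RHS]muln1; apply: modM_congr; rewrite // (modX_congr _ nu_mod2) exp1n.
  case: (qr_flip pr2 prim2 m0 (isT : odd 1) mu_mod2) => qr; [left | right]; apply: Or33.
    by exists m.
  by exists (m * (g * nu ^ M1.-1)) => //; rewrite Ek -mulnA.
case qr: (qr_mod n1 m); first by left; apply: Or32; exists m.
by case/negP: kD; rewrite Ek; apply: scaled_mem_D1 (negbT qr); rewrite -Ek.
Qed.

(* For mu2 = 1 / nu (= g^-1 mod n1, = 1 mod n2), one of k, k * mu2 is a zero
   exponent unless k = 0 or k lies in n1 D_1^(n2); here n1 - 2 is odd. *)
Lemma cover_mu2 (k : nat) : odd n1 -> 0 < k < n -> k \notin map (muln n1) (D1 n2) ->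
  zero_exp k \/ zero_exp (k * nu ^ M1.-1).
Proof.
move=> odd1 kb kD; case: (boolP (coprime k n)) => [co | nco].
  by have := unit_cover 0 co; rewrite expn0 mul1n.
case: (nonunit_split kb nco) => -[m Ek m0].
  case qr: (qr_mod n2 m); first by left; apply: Or33; exists m.
  by case/negP: kD; rewrite Ek; apply: scaled_mem_D1 (negbT qr); rewrite [n2 * n1]mulnC -Ek.
have odd_exp : odd M1.-1.
  by rewrite -(prednK (prime_gt0 pr1)) /= -(prednK M1_gt0) /= negbK in odd1.
case: (qr_flip pr1 nu_prim1 m0 odd_exp (erefl _)) => qr; [left | right]; apply: Or32.
  by exists m.
by exists (m * nu ^ M1.-1) => //; rewrite Ek -mulnA.
Qed.

End UnitsModN.

Section MinWeight.
Variables (F : finFieldType) (L : fieldExtType F) (n : nat).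

Lemma min_oddlike_weight_le_n (gen : {poly L}) : (min_oddlike_weight n gen <= n)%N.
Proof. by rewrite /min_oddlike_weight -minEnat -leEnat; apply: bigmin_le_id. Qed.

Lemma min_oddlike_weight_le (gen : {poly L}) (c : n.-tuple F) :
  in_code gen c -> oddlike c -> (min_oddlike_weight n gen <= wt c)%N.
Proof.
move=> ic oc; rewrite /min_oddlike_weight -minEnat -leEnat.
by apply: bigmin_le_cond; rewrite ic oc.
Qed.

Lemma min_oddlike_weight_sq (gen gen' : {poly L}) :
  (forall c : n.-tuple F, in_code gen c -> oddlike c ->
     exists2 c' : n.-tuple F, in_code gen' c' && oddlike c' & (wt c' <= wt c ^ 2)%N) ->
  (min_oddlike_weight n gen' <= min_oddlike_weight n gen ^ 2)%N.
Proof.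
move=> square; rewrite {2}/min_oddlike_weight.
apply: (big_ind (fun v => min_oddlike_weight n gen' <= v ^ 2)%N).
- apply: leq_trans (min_oddlike_weight_le_n gen') _.
  by case: n => // m; rewrite expnS expn1 leq_pmulr.
- by move=> a b Ha Hb; rewrite /minn; case: ifP.
move=> c /andP[ic oc]; have [c' /andP[ic' oc'] wc'] := square c ic oc.
exact: leq_trans (min_oddlike_weight_le ic' oc') wc'.
Qed.

End MinWeight.

Local Open Scope ring_scope.

Section TwistedSquare.
(* For a word c, the word c(x) c(x^mu) mod (x^n - 1): its weight is at most
   wt(c)^2, its coefficient sum is the square of that of c, and its value at
   an n-th root of unity w is c(w) c(w^mu). *)
Variables (F : fieldType) (L : fieldExtType F) (n : nat).

Definition word_poly (c : n.-tuple F) : {poly L} := map_poly (in_alg L) (Poly c).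

Lemma horner_word_poly (c : n.-tuple F) (w : L) :
  (word_poly c).[w] = \sum_(i < n) in_alg L (tnth c i) * w ^+ i.
Proof.
rewrite /word_poly (horner_coef_wide (n := n)).
  by apply: eq_bigr => i _; rewrite coef_map coef_Poly (tnth_nth 0).
by rewrite size_map_poly (leq_trans (size_Poly _)) // size_tuple.
Qed.

Definition twisted_square (mu : nat) (c : n.-tuple F) : n.-tuple F :=
  [tuple \sum_(i < n) \sum_(j < n)
     (if ((i + j * mu) %% n == k)%N then tnth c i * tnth c j else 0) | k < n].

Lemma horner_twisted_square (mu : nat) (c : n.-tuple F) (w : L) : w ^+ n = 1 ->
  (word_poly (twisted_square mu c)).[w] = (word_poly c).[w] * (word_poly c).[w ^+ mu].
Proof.
move=> wn; rewrite !horner_word_poly.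
under eq_bigr => k _ do rewrite tnth_mktuple raddf_sum mulr_suml.
rewrite exchange_big mulr_suml; apply: eq_bigr => i _.
under eq_bigr => k _ do rewrite raddf_sum mulr_suml.
rewrite exchange_big mulr_sumr; apply: eq_bigr => j _.
have n_gt0 : (0 < n)%N := leq_ltn_trans (leq0n i) (ltn_ord i).
rewrite (bigD1 (Ordinal (ltn_pmod (i + j * mu) n_gt0))) //= eqxx big1 ?addr0.
  by rewrite expr_mod // -scalerA -mulr_algl -exprM exprD mulnC mulrACA.
move=> k k_neq; rewrite ifN ?scale0r ?mul0r //.
by apply: contra_neq k_neq => E; apply: val_inj; rewrite /= E.
Qed.

(* Each pair (i, j) contributes to exactly one coefficient. *)
Lemma sum_twisted_square (mu : nat) (c : n.-tuple F) :
  \sum_(a <- twisted_square mu c) a = (\sum_(a <- c) a) ^+ 2.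
Proof.
rewrite !big_tuple expr2 mulr_suml.
under eq_bigr => k _ do rewrite tnth_mktuple.
rewrite exchange_big; apply: eq_bigr => i _; rewrite mulr_sumr exchange_big.
apply: eq_bigr => j _; have n_gt0 : (0 < n)%N := leq_ltn_trans (leq0n i) (ltn_ord i).
by rewrite -big_mkcond (big_pred1 (Ordinal (ltn_pmod (i + j * mu) n_gt0))).
Qed.

Lemma oddlike_twisted_square (mu : nat) (c : n.-tuple F) :
  oddlike c -> oddlike (twisted_square mu c).
Proof. by rewrite /oddlike sum_twisted_square => /expf_neq0->. Qed.

Lemma wt_card (c : n.-tuple F) : wt c = #|[set i : 'I_n | tnth c i != 0]|.
Proof.
rewrite /wt -sum1_count big_tuple -sum1_card.
by apply: eq_bigl => i; rewrite inE.
Qed.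

(* The support of c(x) c(x^mu) is contained in the image of
   supp(c) x supp(c) under (i, j) |-> i + j mu mod n. *)
Lemma wt_twisted_square (mu : nat) (c : n.-tuple F) :
  (wt (twisted_square mu c) <= wt c ^ 2)%N.
Proof.
rewrite !wt_card -mulnn -cardsX.
have [n0|n_gt0] := posnP n.
  by apply: leq_trans (max_card _) (leq_trans (eq_leq _) (leq0n _)); rewrite card_ord.
set S := [set i | tnth c i != 0].
pose f := fun p : 'I_n * 'I_n => (Ordinal (ltn_pmod (p.1 + p.2 * mu) n_gt0) : 'I_n).
apply: leq_trans (leq_imset_card f (setX S S)).
apply/subset_leq_card/subsetP => k; rewrite inE tnth_mktuple; apply: contraNT => notin.
apply/eqP; apply: big1 => i _; apply: big1 => j _; case: ifP => // E.
have [ci0|ci] := eqVneq (tnth c i) 0; first by rewrite ci0 mul0r.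
have [cj0|cj] := eqVneq (tnth c j) 0; first by rewrite cj0 mulr0.
case/imsetP: notin; exists (i, j); first by rewrite !inE ci cj.
by apply: val_inj; rewrite /= (eqP E).
Qed.

End TwistedSquare.

Lemma root_prod_exp (L : fieldType) (s : seq nat) (f : nat -> L) (k : nat) :
  k \in s -> root (\prod_(i <- s) ('X - (f i)%:P)) (f k).
Proof. by move=> ks; rewrite -(big_map f xpredT (fun z => 'X - z%:P)) root_prod_XsubC map_f. Qed.

Section RootsOfUnity.
Variables (L : fieldType) (n : nat) (theta : L).
Hypothesis prim : n.-primitive_root theta.

(* (x^n - 1) / prod_{k in R} (x - theta^k) = prod_{k < n, k notin R} (x - theta^k)
   divides every polynomial vanishing at all theta^k, k < n, k notin R. *)
Lemma dvd_cofactor_of_roots (R : seq nat) (P : {poly L}) :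
  uniq R -> (forall k, k \in R -> (k < n)%N) ->
  (forall k, (k < n)%N -> k \notin R -> root P (theta ^+ k)) ->
  ('X^n - 1) %/ \prod_(k <- R) ('X - (theta ^+ k)%:P) %| P.
Proof.
move=> uR Rn HP; set S := [seq k <- iota 0 n | k \notin R].
have perm_SR : perm_eq (iota 0 n) (S ++ R).
  rewrite -(perm_filterC (fun k => k \notin R) (iota 0 n)) perm_cat2l.
  apply: uniq_perm; rewrite ?filter_uniq ?iota_uniq // => x.
  rewrite mem_filter /= negbK mem_iota add0n.
  by case xR: (x \in R); rewrite ?(Rn _ xR).
have -> : 'X^n - 1 =
    \prod_(k <- S) ('X - (theta ^+ k)%:P) * \prod_(k <- R) ('X - (theta ^+ k)%:P).
  by rewrite -(factor_Xn_sub_1 prim) -big_cat /index_iota subn0; apply: perm_big.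
rewrite mulpK ?monic_neq0 ?monic_prod_XsubC //.
rewrite -(big_map (fun k => theta ^+ k) xpredT (fun z => 'X - z%:P)).
apply: uniq_roots_dvdp.
  apply/allP => z /mapP[k]; rewrite mem_filter mem_iota add0n => /andP[kR kn] ->.
  exact: HP.
rewrite uniq_rootsE map_inj_in_uniq ?filter_uniq ?iota_uniq // => x y.
rewrite !mem_filter !mem_iota !add0n => /andP[_ xn] /andP[_ yn] /eqP.
by rewrite (eq_prim_root_expr prim) !modn_small // => /eqP.
Qed.

End RootsOfUnity.

Section SquareBound.
Variables (F : finFieldType) (L : fieldExtType F) (n : nat) (theta : L).
Hypothesis prim : n.-primitive_root theta.

(* The reduction: let all codewords of a code with generator gen vanish at
   theta ^ x for x in Z, and let every exponent k < n outside R satisfy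
   Z k or Z (k mu).  Then each odd-like c of that code gives the odd-like
   word c(x) c(x^mu) of the code with nonzeros {theta^k : k in R}. *)
Lemma square_bound (Z : nat -> Prop) (gen : {poly L}) (R : seq nat) (mu : nat) :
  (forall c : n.-tuple F, in_code gen c -> forall x, Z x -> (word_poly L c).[theta ^+ x] = 0) ->
  uniq R -> (forall k, k \in R -> (k < n)%N) ->
  (forall k, (k < n)%N -> k \notin R -> Z k \/ Z (k * mu)%N) ->
  (min_oddlike_weight n (('X^n - 1) %/ \prod_(k <- R) ('X - (theta ^+ k)%:P))
     <= min_oddlike_weight n gen ^ 2)%N.
Proof.
move=> vanish uR Rn cover; apply: min_oddlike_weight_sq => c ic oc.
exists (twisted_square mu c); last exact: wt_twisted_square.
rewrite oddlike_twisted_square // andbT; apply: dvd_cofactor_of_roots => // k kn kR.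
rewrite /root -/(word_poly L _) horner_twisted_square; last first.
  by rewrite exprAC (prim_expr_order prim) expr1n.
by rewrite -exprM; case: (cover k kn kR) => /(vanish c ic)->; rewrite ?mul0r ?mulr0.
Qed.

End SquareBound.

Lemma mem_D0 (p m : nat) : (0 < p)%N -> qr_mod p m -> (m %% p)%N \in D0 p.
Proof.
move=> p0 qr_m; have qr_mod_m : qr_mod p (m %% p) by rewrite /qr_mod !modn_mod.
rewrite mem_filter mem_iota qr_mod_m /= add1n prednK // ltn_pmod // andbT lt0n.
by case/andP: qr_m.
Qed.

Lemma code000_vanishes (F : fieldType) (L : fieldExtType F) (n1 n2 g nu : nat) (theta : L) :
  prime n1 -> prime n2 -> (n1 * n2).-primitive_root theta -> forall c : (n1 * n2).-tuple F,
  in_code (upoly theta (U0 n1 n2 g nu) * dpoly theta n2 (D0 n1) * dpoly theta n1 (D0 n2)) c ->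
  forall x, zero_exp n1 n2 g nu x -> (word_poly L c).[theta ^+ x] = 0.
Proof.
move=> pr1 pr2 prim c c_in x Zx; apply/eqP; apply: (root_dvdp c_in); rewrite !rootM.
case: Zx => [U | [m -> qr_m] | [m -> qr_m]].
- by rewrite -(prim_expr_mod prim x) /upoly (root_prod_exp (fun i => theta ^+ i) U).
- rewrite -(prim_expr_mod prim (n2 * m)) [(n1 * n2)%N]mulnC -muln_modr.
  by rewrite (root_prod_exp (fun j => theta ^+ (n2 * j)) (mem_D0 (prime_gt0 pr1) qr_m)) orbT.
- rewrite -(prim_expr_mod prim (n1 * m)) -muln_modr.
  by rewrite (root_prod_exp (fun j => theta ^+ (n1 * j)) (mem_D0 (prime_gt0 pr2) qr_m)) orbT.
Qed.

(* The generator of C_1^(n/p) is (x^n - 1) / prod_{k in R} (x - theta^k) for the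
   exponent list R = 0 :: m D_1^(p), which is duplicate-free and below p m. *)
Lemma nonzeros_prod (L : fieldType) (theta : L) (m : nat) (D : seq nat) :
  ('X - 1) * dpoly theta m D = \prod_(k <- 0%N :: map (muln m) D) ('X - (theta ^+ k)%:P).
Proof. by rewrite big_cons expr0 big_map. Qed.

Lemma nonzeros_uniq (m p : nat) : (0 < m)%N -> uniq (0%N :: map (muln m) (D1 p)).
Proof.
move=> m0 /=; apply/andP; split.
  apply/negP; case/mapP => j; rewrite mem_filter mem_iota => /andP[_ /andP[j1 _]] /esym /eqP.
  by rewrite muln_eq0 -!leqn0 leqNgt m0 leqNgt j1.
rewrite map_inj_in_uniq ?filter_uniq ?iota_uniq // => x y _ _ /eqP.
by rewrite eqn_pmul2l // => /eqP.
Qed.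

Lemma nonzeros_lt (m p k : nat) : prime m -> prime p ->
  k \in 0%N :: map (muln m) (D1 p) -> (k < p * m)%N.
Proof.
move=> pr_m pr_p; rewrite in_cons => /orP[/eqP-> | /mapP[j]].
  by rewrite muln_gt0 !prime_gt0.
rewrite mem_filter mem_iota => /andP[_ /andP[_ jp]] ->.
by rewrite mulnC ltn_pmul2r ?prime_gt0 // -(prednK (prime_gt0 pr_p)) -add1n.
Qed.

Unset Implicit Arguments.

Theorem mainTheorem3 (F : finFieldType) (L : fieldExtType F)
  (q n1 n2 g1 g2 g nu : nat) (theta : L) :
  let n := (n1 * n2)%N in
  let d := gcdn n1.-1 n2.-1 in
  let e := (n1.-1 * n2.-1 %/ d)%N in
  prime n1 -> prime n2 -> odd n1 -> odd n2 -> n1 != n2 ->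
  #|F| = q -> coprime q n ->
  is_prim_root_mod n1 g1 -> is_prim_root_mod n2 g2 ->
  (g = g1 %[mod n1])%N -> (g = g2 %[mod n2])%N ->
  (nu = g %[mod n1])%N -> (nu = 1 %[mod n2])%N ->
  n.-primitive_root theta ->
  (q %% n)%N \in Useq n e d g nu false ->
  qr_mod n1 q -> qr_mod n2 q ->
  let gen000 := upoly theta (Useq n e d g nu false)
                 * dpoly theta n2 (D0 n1) * dpoly theta n1 (D0 n2) in
  let gen1_1 := ('X^n - 1) %/ (('X - 1) * dpoly theta n2 (D1 n1)) in
  let gen1_2 := ('X^n - 1) %/ (('X - 1) * dpoly theta n1 (D1 n2)) in
  (maxn (min_oddlike_weight (F:=F) n gen1_1) (min_oddlike_weight (F:=F) n gen1_2)
     <= (min_oddlike_weight (F:=F) n gen000) ^ 2)%N.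
Proof.
move=> n d e pr1 pr2 odd1 _ n1_neq_n2 _ _ prim_g1 prim_g2 Eg1 Eg2 Enu1 Enu2 prim _ _ _ /=.
have prim1 := prim_root_congr prim_g1 Eg1; have prim2 := prim_root_congr prim_g2 Eg2.
have vanish := code000_vanishes (g := g) (nu := nu) pr1 pr2 prim.
rewrite geq_max !nonzeros_prod; apply/andP; split; apply: (square_bound prim vanish).
- exact: nonzeros_uniq (prime_gt0 pr2).
- by move=> k; apply: nonzeros_lt.
- move=> k kn; rewrite in_cons negb_or -lt0n => /andP[k0 kD].
  by apply: cover_mu1; rewrite ?k0.
- exact: nonzeros_uniq (prime_gt0 pr1).
- by move=> k; rewrite /n mulnC; apply: nonzeros_lt.
- move=> k kn; rewrite in_cons negb_or -lt0n => /andP[k0 kD].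
  by apply: cover_mu2; rewrite ?k0.
Qed.
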